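(* Let $G$ be a bipartite graph with bipartition $(X,Y)$, $|X| = n\geq 2$, $|Y|=m$, every $x\in X$ having degree at least $\delta$. Let $(C,x)$ be a tight pair in $G$, with $C = y_1x_1y_2x_2\ldots y_\ell x_\ell y_1$ where $x_i \in X$, $y_i\in Y$. If $y_i \in N(x)$ for some $i$, then $N(x_i) \setminus V(C)$ and $N(x)\setminus V(C)$ are disjoint.
   Context: A tight pair in $G$ is a pair $(C,x)$ where $C$ is a longest cycle in $G$ and $x \in X \setminus V(C)$, chosen such that $|N(x)\cap V(C)|$ is maximum over all pairs $(C',x')$ with $C'$ a longest cycle in $G$ and $x' \in X\setminus V(C')$. ($G$ has a tight pair iff it has no cycle of length $2n$.) *)

From mathcomp Require Import all_boot.
Set Implicit Arguments.
Unset Strict Implicit.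
Unset Printing Implicit Defensive.

Section Graphs.
Variable T : finType.

Definition simple_graph (e : rel T) : Prop :=
  symmetric e /\ irreflexive e.

Definition bipartition (e : rel T) (X Y : {set T}) : Prop :=
  [/\ X :&: Y = set0, X :|: Y = setT &
      forall u v, e u v -> (u \in X) && (v \in Y) || (u \in Y) && (v \in X)].

Definition nbhd (e : rel T) (v : T) : {set T} := [set u | e v u].

Definition is_cycle (e : rel T) (c : seq T) : bool :=
  [&& 3 <= size c, uniq c & path.cycle e c].

Definition longest_cycle (e : rel T) (c : seq T) : Prop :=
  is_cycle e c /\ forall c', is_cycle e c' -> size c' <= size c.

Definition tight_pair (e : rel T) (X : {set T}) (c : seq T) (x : T) : Prop :=
  [/\ longest_cycle e c, x \in X, x \notin c &
      forall c' x', longest_cycle e c' -> x' \in X -> x' \notin c' ->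
        #|nbhd e x' :&: [set v in c']| <= #|nbhd e x :&: [set v in c]| ].
End Graphs.

From mathcomp Require Import all_boot zify.

Set Implicit Arguments.
Unset Strict Implicit.
Unset Printing Implicit Defensive.

(* If y were a common neighbour of x_i and x outside C, replacing the edge
   y_i x_i of C by the path y_i x y x_i would give a cycle two vertices longer
   than C. *)

Section Detour.
Variables (T : finType) (e : rel T).

Lemma rot_at_consecutive (x0 : T) (c : seq T) (k : nat) : k.+1 < size c ->
  rot k c = nth x0 c k :: nth x0 c k.+1 :: (drop k.+2 c ++ take k c).
Proof. by move=> lt_k1c; rewrite /rot (drop_nth x0) ?(ltnW lt_k1c) // (drop_nth x0). Qed.

Lemma is_cycle_detour (a b x y : T) (s : seq T) :
  is_cycle e [:: a, b & s] -> x \notin [:: a, b & s] -> y \notin [:: a, b & s] ->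
  x != y -> e a x -> e x y -> e y b -> is_cycle e [:: a, x, y, b & s].
Proof.
rewrite /is_cycle /= !inE !negb_or => /and3P[_ uniq_abs /andP[_ path_bs]].
move=> /and3P[xa xb xs] /and3P[ya yb ys] xy eax exy eyb.
move: uniq_abs => /and3P[/andP[ab as_] bs uniq_s].
by rewrite (eq_sym a x) (eq_sym a y) xa ya ab as_ xy xb xs yb ys bs uniq_s eax exy eyb
  path_bs.
Qed.

Lemma longest_cycle_no_detour (x0 : T) (c : seq T) (k : nat) (x y : T) :
  longest_cycle e c -> k.+1 < size c -> x \notin c -> y \notin c -> x != y ->
  e (nth x0 c k) x -> e x y -> e y (nth x0 c k.+1) -> False.
Proof.
move=> [cyc_c longest] lt_k1c xNc yNc xy eax exy eyb.
have := rot_at_consecutive x0 lt_k1c.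
set a := nth x0 c k; set b := nth x0 c k.+1; set s := drop _ _ ++ _ => rot_c.
have cyc_abs : is_cycle e [:: a, b & s].
  by rewrite -rot_c /is_cycle size_rot rot_uniq rot_cycle.
have := is_cycle_detour (x := x) (y := y) cyc_abs; rewrite -rot_c !mem_rot.
move=> /(_ xNc yNc xy eax exy eyb) /longest.
by rewrite -(size_rot k c) rot_c /= ltnNge leqnSn.
Qed.

End Detour.

Theorem claim1 (T : finType) (e : rel T) (X Y : {set T}) (n m delta : nat)
  (x0 : T) (c : seq T) (x : T) (i : nat) :
  simple_graph e -> bipartition e X Y ->
  #|X| = n -> 2 <= n -> #|Y| = m ->
  (forall v, v \in X -> delta <= #|nbhd e v|) ->
  tight_pair e X c x ->
  head x0 c \in Y ->
  i < size c %/ 2 ->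
  e x (nth x0 c (2 * i)) ->
  [disjoint (nbhd e (nth x0 c (2 * i).+1) :\: [set v in c])
          & (nbhd e x :\: [set v in c])].
Proof.
move=> [e_sym e_irr] _ _ _ _ _ [longest_c _ xNc _] _ lt_i ex_yi.
rewrite -setI_eq0; apply/eqP/setP => y; rewrite !inE.
apply/negP => /and3P[/andP[yNc exi_y] _ ex_y].
have lt_xi : (2 * i).+1 < size c.
  by have := leq_divM (size c) 2; lia.
have xy : x != y by apply: contraTneq ex_y => ->; rewrite e_irr.
by apply: (longest_cycle_no_detour (x0 := x0) longest_c lt_xi xNc yNc xy);
  rewrite // e_sym.
Qed.
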